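(* Let $M$ be an abelian group and $\mathcal{A}=\bigoplus_{\chi\in M}\mathcal{A}^\chi$ a finite-dimensional commutative unital $M$-graded $\mathbb{C}$-algebra (so $\mathcal{A}^\chi\mathcal{A}^\psi\subseteq\mathcal{A}^{\chi+\psi}$). Suppose there exist an integer $d>0$ and $\chi\in M$ with $\dim\mathcal{A}^\chi>\dim\mathcal{A}^{d\chi}$. Then there exists $\varepsilon\in\mathcal{A}\setminus\{0\}$ with $\varepsilon^d=0$. *)

From HB Require Import structures.
From mathcomp Require Import all_boot all_order all_algebra all_field.
From mathcomp Require Import complex.
From mathcomp Require Import Rstruct.
From Stdlib Require Import Reals.

Set Implicit Arguments.
Unset Strict Implicit.
Unset Printing Implicit Defensive.

Import GRing.Theory.
Local Open Scope ring_scope.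

Definition CC : fieldType := (Rdefinitions.R)[i].

(* An M-grading of a finite-dimensional algebra A (over a field F) by a family
   of subspaces Ag : M -> {vspace A}:
   (1) A is the (internal) direct sum of the Ag χ:
       - independence: for every finite family of distinct degrees, homogeneous
         elements summing to 0 are all 0;
       - spanning: A is spanned by finitely many of the Ag χ;
   (2) multiplicativity: Ag χ * Ag ψ ⊆ Ag (χ + ψ). *)
Definition graded_by (F : fieldType) (A : falgType F) (M : zmodType)
    (Ag : M -> {vspace A}) : Prop :=
  [/\ (forall (s : seq M) (v : M -> A), uniq s ->
         (forall chi, v chi \in Ag chi) ->
         \sum_(chi <- s) v chi = 0 ->
         forall chi, chi \in s -> v chi = 0),
      (exists s : seq M, (\sum_(chi <- s) Ag chi)%VS = fullv) &
      (forall (chi psi : M) (x y : A), x \in Ag chi -> y \in Ag psi ->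
         x * y \in Ag (chi + psi))].

From HB Require Import structures.
From mathcomp Require Import all_boot all_order all_algebra all_field.
From Stdlib Require Import Classical.

(* If A has no nonzero element with eps^d = 0, then it is reduced (the case
   d = 1 being excluded by the dimension hypothesis).  In a reduced commutative
   algebra every subspace V contains an element u whose annihilator meets V
   trivially: while some 0 <> x in V kills u, passing from u to u + x strictly
   shrinks the annihilator.  For such u in A^chi, multiplication by u^(d-1) is
   injective on A^chi (x u^(d-1) = 0 forces x u = 0 by reducedness) and maps
   A^chi into A^(d chi), so dim A^chi <= dim A^(d chi). *)

Set Implicit Arguments.
Unset Strict Implicit.
Unset Printing Implicit Defensive.

Local Open Scope ring_scope.
Import GRing.Theory.

Section ReducedCommutativeAlgebra.

Variables (F : fieldType) (A : falgType F).
Hypothesis mulC : forall x y : A, x * y = y * x.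
Hypothesis reduced : forall x : A, x ^+ 2 = 0 -> x = 0.

Definition ann (u : A) : {vspace A} := lker (amulr u).

Lemma mem_ann (x u : A) : (x \in ann u) = (x * u == 0).
Proof. by rewrite memv_ker lfunE. Qed.

Lemma mul_exprS_eq0 (x u : A) n : x * u ^+ n.+1 = 0 -> x * u = 0.
Proof.
elim: n => [|n IHn]; first by rewrite expr1.
move=> xun0; apply: IHn; apply: reduced.
have -> : (x * u ^+ n.+1) ^+ 2 = (x * u ^+ n.+2) * (x * u ^+ n).
  rewrite expr2 (exprSr u n.+1) -!mulrA; congr (x * _).
  by rewrite [u * _]mulC -mulrA -exprSr.
by rewrite xun0 mul0r.
Qed.

Lemma ann_addr_sub (u x : A) : x \in ann u -> (ann (u + x)%R <= ann u)%VS.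
Proof.
rewrite mem_ann => /eqP xu0; apply/subvP => y; rewrite !mem_ann mulrDr.
rewrite addr_eq0 => /eqP yu; apply/eqP/reduced.
by rewrite expr2 {1}yu mulNr -mulrA (mulrA x) [x * y]mulC -mulrA xu0 !mulr0 oppr0.
Qed.

Lemma dim_ann_addr_lt (u x : A) :
  x \in ann u -> x != 0 -> (\dim (ann (u + x)%R) < \dim (ann u))%N.
Proof.
move=> x_ann x_neq0; rewrite (ltn_leqif (dimv_leqif_eq (ann_addr_sub x_ann))).
have xu0 : x * u = 0 by apply/eqP; rewrite -mem_ann.
apply: contra x_neq0 => /eqP ann_eq; move: x_ann.
by rewrite -ann_eq mem_ann mulrDr xu0 add0r -expr2 => /eqP /reduced ->.
Qed.

Lemma exists_ann_cap_eq0 (V : {vspace A}) :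
  exists2 u, u \in V & (ann u :&: V = 0)%VS.
Proof.
suff: forall n u, u \in V -> (\dim (ann u) <= n)%N ->
    exists2 v, v \in V & (ann v :&: V = 0)%VS.
  by apply; [exact: mem0v | exact: leqnn].
elim=> [|n IHn] u uV dim_ann.
  exists u => //; apply/eqP; rewrite -subv0 (subv_trans (capvSl _ _)) //.
  by rewrite subv0 -dimv_eq0 -leqn0.
have [ann_cap0|] := eqVneq (ann u :&: V)%VS 0%VS; first by exists u.
rewrite -vpick0; set x := vpick _ => x_neq0.
have /memv_capP[x_ann xV] : x \in (ann u :&: V)%VS by exact: memv_pick.
apply: (IHn (u + x)); first exact: rpredD.
by rewrite -ltnS (leq_trans (dim_ann_addr_lt x_ann x_neq0)).
Qed.

Variables (M : zmodType) (Ag : M -> {vspace A}).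
Hypothesis gradedM : forall (chi psi : M) (x y : A),
  x \in Ag chi -> y \in Ag psi -> x * y \in Ag (chi + psi).

Lemma mul_expr_graded chi (u x : A) n :
  u \in Ag chi -> x \in Ag chi -> x * u ^+ n \in Ag (chi *+ n.+1).
Proof.
move=> uA; elim: n x => [|n IHn] x xA; first by rewrite mulr1 mulr1n.
by rewrite exprSr mulrA mulrSr; apply: gradedM => //; apply: IHn.
Qed.

Lemma dim_graded_le_mulrn chi n : (\dim (Ag chi) <= \dim (Ag (chi *+ n.+1)))%N.
Proof.
have [u uA ann_cap0] := exists_ann_cap_eq0 (Ag chi).
have ker_cap0 : (Ag chi :&: ann (u ^+ n)%R = 0)%VS.
  apply/eqP; rewrite -subv0 -ann_cap0 capvC; apply/subvP => x.
  rewrite !memv_cap !mem_ann => /andP[/eqP xun0 ->]; rewrite andbT.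
  by rewrite (@mul_exprS_eq0 _ _ n) // exprSr mulrA xun0 mul0r.
rewrite -(limg_dim_eq ker_cap0); apply: dimvS.
by apply/subvP => _ /memv_imgP[x xA ->]; rewrite lfunE mul_expr_graded.
Qed.

End ReducedCommutativeAlgebra.

Theorem lemma2p1 (M : zmodType) (A : falgType CC) (Ag : M -> {vspace A}) :
  (forall x y : A, x * y = y * x) ->
  graded_by Ag ->
  forall (d : nat) (chi : M), (0 < d)%N ->
  (\dim (Ag (chi *+ d)) < \dim (Ag chi))%N ->
  exists eps : A, eps != 0 /\ eps ^+ d = 0.
Proof.
move=> mulC [_ _ gradedM] [//|[|d]] chi _; first by rewrite mulr1n ltnn.
rewrite ltnNge => /negP dim_gt; apply: NNPP => no_nilpotent; apply: dim_gt.
apply: dim_graded_le_mulrn => // x x2_eq0.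
apply: NNPP => /eqP x_neq0; apply: no_nilpotent; exists x.
by rewrite x_neq0 -addn2 exprD x2_eq0 mulr0.
Qed.
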